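(* For any group $A$, the assignment $q\mapsto\mathrm{Ker}(q)$ yields a bijection $$\bigsqcup_{B<A}\mathcal Z^1(\mathsf T^l_{\imath_B},(B,m_B))\;\cong\;\mathsf{FAC}(A),$$ sending $q$ in the $B$-summand to $(B,\mathrm{Ker}(q))$, where $B$ ranges over proper subgroups of $A$ and $\imath_B:B\hookrightarrow A$ is the inclusion.
   Context: For a subgroup $B$ of $A$ with inclusion $\imath_B$, $\mathcal Z^1(\mathsf T^l_{\imath_B},(B,m_B))$ is identified with the set of maps $q:A\to B$ satisfying (ZL1) $q(1_A)=1_A$; (ZL2) $q(ba)=b\,q(a)$ for all $a\in A,b\in B$; (ZL3) $q(aa')=q(a\,q(a'))$ for all $a,a'\in A$ (these are exactly the algebra structures on the left $B$-set $B$ for the monad $A\otimes_B-$ on left $B$-sets). $\mathrm{Ker}(q)=\{a:q(a)=1_A\}$. $\mathsf{FAC}(A)$ is the set of pairs $(B,X)$ with $B$ a proper subgroup of $A$, $X$ a subgroup of $A$, $B\cap X=\{1_A\}$ and $BX=A$. *)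

(* an arbitrary (possibly infinite) group given by its carrier
   type and operations; subsets/subgroups are predicates T -> Prop. *)

Record is_group {T : Type} (mul : T -> T -> T) (one : T) (inv : T -> T) : Prop := {
  grp_assoc : forall x y z, mul x (mul y z) = mul (mul x y) z;
  grp_mul1l : forall x, mul one x = x;
  grp_mulVl : forall x, mul (inv x) x = one
}.

Definition is_subgroup {T : Type} (mul : T -> T -> T) (one : T) (inv : T -> T)
  (B : T -> Prop) : Prop :=
  B one /\ (forall x y, B x -> B y -> B (mul x y)) /\ (forall x, B x -> B (inv x)).

Definition is_proper_subgroup {T : Type} (mul : T -> T -> T) (one : T) (inv : T -> T)
  (B : T -> Prop) : Prop :=
  is_subgroup mul one inv B /\ exists a, ~ B a.

Definition Z1 {T : Type} (mul : T -> T -> T) (one : T)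
  (B : T -> Prop) (q : T -> T) : Prop :=
  (forall a, B (q a)) /\
  q one = one /\
  (forall a b, B b -> q (mul b a) = mul b (q a)) /\
  (forall a a', q (mul a a') = q (mul a (q a'))).

Definition Ker {T : Type} (one : T) (q : T -> T) : T -> Prop := fun a => q a = one.

Definition in_FAC {T : Type} (mul : T -> T -> T) (one : T) (inv : T -> T)
  (B X : T -> Prop) : Prop :=
  is_proper_subgroup mul one inv B /\
  is_subgroup mul one inv X /\
  (forall a, B a -> X a -> a = one) /\
  (forall a, exists b x, B b /\ X x /\ a = mul b x).

(* A cocycle q : A -> B is a B-equivariant retraction of A onto B, so every a
   factors as a = q(a) * (q(a)^-1 a) with q(a)^-1 a in Ker q; (ZL3) makes Ker q
   a subgroup, and equivariance makes it meet B trivially.  Conversely, an exact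
   factorisation A = B X has a unique B-component map, which satisfies
   (ZL1)-(ZL3) and has kernel X.  Injectivity holds because q(a) is recovered
   from Ker q as the B-factor of a. *)

From Stdlib Require Import ClassicalEpsilon.

Section Group.
Variables (T : Type) (mul : T -> T -> T) (one : T) (inv : T -> T).
Hypothesis HA : is_group mul one inv.

Lemma mulgV x : mul x (inv x) = one.
Proof.
  destruct HA as [As L1 LV].
  rewrite <- (L1 (mul x (inv x))), <- (LV (inv x)) at 1.
  rewrite <- As, (As (inv x) x (inv x)), LV, L1.
  apply LV.
Qed.

Lemma mulg1 x : mul x one = x.
Proof.
  destruct HA as [As L1 LV].
  rewrite <- (LV x), As, mulgV.
  apply L1.
Qed.

Lemma mulKg c a : mul c (mul (inv c) a) = a.
Proof.
  destruct HA as [As L1 _].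
  rewrite As, mulgV.
  apply L1.
Qed.

Lemma mulVKg c a : mul (inv c) (mul c a) = a.
Proof.
  destruct HA as [As L1 LV].
  rewrite As, LV.
  apply L1.
Qed.

Lemma mulgKV c a : mul (mul a c) (inv c) = a.
Proof.
  destruct HA as [As _ _].
  rewrite <- As, mulgV.
  apply mulg1.
Qed.

(* b^-1 b' = x x'^-1 lies in both factors. *)
Lemma factor_uniq (B X : T -> Prop) :
  is_subgroup mul one inv B -> is_subgroup mul one inv X ->
  (forall a, B a -> X a -> a = one) ->
  forall b x b' x', B b -> X x -> B b' -> X x' ->
  mul b x = mul b' x' -> b = b'.
Proof.
  intros [_ [BM BI]] [_ [XM XI]] HBX b x b' x' Hb Hx Hb' Hx' E.
  assert (Ebx : mul (inv b) b' = mul x (inv x')).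
  { rewrite <- (mulVKg b (mul x (inv x'))), (grp_assoc _ _ _ HA b), E, mulgKV.
    reflexivity. }
  assert (E1 : mul (inv b) b' = one).
  { apply HBX; [apply BM; auto | rewrite Ebx; apply XM; auto]. }
  rewrite <- (mulKg b b'), E1.
  symmetry; apply mulg1.
Qed.

Section Cocycle.
Variables (B : T -> Prop) (q : T -> T).
Hypotheses (HB : is_subgroup mul one inv B) (Hq : Z1 mul one B q).

Lemma Z1_Ker_subgroup : is_subgroup mul one inv (Ker one q).
Proof.
  destruct Hq as [_ [Q1 [_ Q3]]].
  unfold Ker; split; [exact Q1 | split].
  - intros x y Hx Hy.
    rewrite Q3, Hy, mulg1.
    exact Hx.
  - intros x Hx.
    rewrite <- (mulg1 (inv x)), <- Hx at 1; rewrite <- Q3, (grp_mulVl _ _ _ HA).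
    exact Q1.
Qed.

Lemma Z1_Ker_trivI a : B a -> Ker one q a -> a = one.
Proof.
  destruct Hq as [_ [Q1 [Q2 _]]].
  unfold Ker; intros Ha Hk.
  rewrite <- (mulg1 a), Q2, Q1, mulg1 in Hk; auto.
Qed.

Lemma Z1_Ker_factor a : Ker one q (mul (inv (q a)) a).
Proof.
  destruct Hq as [QB [_ [Q2 _]]].
  unfold Ker; rewrite Q2 by (apply HB, QB).
  apply (grp_mulVl _ _ _ HA).
Qed.

Lemma Z1_in_FAC :
  (exists a, ~ B a) -> in_FAC mul one inv B (Ker one q).
Proof.
  intros Hproper.
  split; [split; assumption | split; [exact Z1_Ker_subgroup | split]].
  - exact Z1_Ker_trivI.
  - intros a.
    exists (q a), (mul (inv (q a)) a).
    split; [apply Hq | split; [apply Z1_Ker_factor | symmetry; apply mulKg]].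
Qed.

(* q' a = q' (q a * k) = q a * q' k with k := q(a)^-1 a in Ker q. *)
Lemma Z1_eq_of_Ker_sub (B' : T -> Prop) (q' : T -> T) :
  Z1 mul one B' q' -> (forall a, B a -> B' a) ->
  (forall a, Ker one q a -> Ker one q' a) ->
  forall a, q' a = q a.
Proof.
  intros [_ [_ [Q2' _]]] HBB' HK a.
  rewrite <- (mulKg (q a) a) at 1.
  rewrite Q2' by (apply HBB', Hq).
  rewrite (HK _ (Z1_Ker_factor a)).
  apply mulg1.
Qed.

End Cocycle.

Section Factorisation.
Variables (B X : T -> Prop).
Hypotheses (HB : is_subgroup mul one inv B) (HX : is_subgroup mul one inv X)
  (HBX : forall a, B a -> X a -> a = one)
  (HBXA : forall a, exists b x, B b /\ X x /\ a = mul b x).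

Definition factor_proj (a : T) : T :=
  proj1_sig (constructive_indefinite_description _ (HBXA a)).

Lemma factor_projP a : B (factor_proj a) /\ exists x, X x /\ a = mul (factor_proj a) x.
Proof.
  unfold factor_proj.
  destruct (constructive_indefinite_description _ (HBXA a)) as [b [x [Hb [Hx E]]]].
  simpl; eauto.
Qed.

Lemma factor_proj_eq a b x : B b -> X x -> a = mul b x -> factor_proj a = b.
Proof.
  intros Hb Hx E.
  destruct (factor_projP a) as [Hp [y [Hy Ey]]].
  apply (factor_uniq B X HB HX HBX _ y _ x); auto.
  congruence.
Qed.

Lemma factor_proj_Z1 : Z1 mul one B factor_proj.
Proof.
  destruct HB as [B1 [BM _]]; destruct HX as [X1 [XM _]].
  destruct HA as [As L1 _].
  split; [| split; [| split]].
  - intros a; apply factor_projP.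
  - apply (factor_proj_eq _ _ one B1 X1).
    symmetry; apply L1.
  - intros a b Hb.
    destruct (factor_projP a) as [Hp [y [Hy Ey]]].
    apply (factor_proj_eq _ _ y); auto.
    rewrite Ey at 1; apply As.
  - intros a a'.
    destruct (factor_projP a') as [_ [y' [Hy' Ey']]].
    destruct (factor_projP (mul a (factor_proj a'))) as [Hp [y [Hy Ey]]].
    apply (factor_proj_eq _ _ (mul y y')); auto.
    rewrite As, <- Ey, <- As, <- Ey'.
    reflexivity.
Qed.

Lemma factor_proj_Ker a : Ker one factor_proj a <-> X a.
Proof.
  unfold Ker; split.
  - intros E.
    destruct (factor_projP a) as [_ [y [Hy Ey]]].
    rewrite E, (grp_mul1l _ _ _ HA) in Ey.
    subst; exact Hy.
  - intros Ha.
    apply (factor_proj_eq _ _ a (proj1 HB) Ha).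
    symmetry; apply (grp_mul1l _ _ _ HA).
Qed.

End Factorisation.

End Group.

Theorem theorem4p8 (T : Type) (mul : T -> T -> T) (one : T) (inv : T -> T)
  (HA : is_group mul one inv) :
  (forall (B : T -> Prop) (q : T -> T),
     is_proper_subgroup mul one inv B -> Z1 mul one B q ->
     in_FAC mul one inv B (Ker one q)) /\
  (forall (B B' : T -> Prop) (q q' : T -> T),
     is_proper_subgroup mul one inv B -> Z1 mul one B q ->
     is_proper_subgroup mul one inv B' -> Z1 mul one B' q' ->
     (forall a, B a <-> B' a) ->
     (forall a, Ker one q a <-> Ker one q' a) ->
     forall a, q a = q' a) /\
  (forall (B X : T -> Prop),
     in_FAC mul one inv B X ->
     exists q : T -> T, Z1 mul one B q /\ (forall a, Ker one q a <-> X a)).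
Proof.
  split; [| split].
  - intros B q [HB Hproper] Hq.
    exact (Z1_in_FAC _ _ _ _ HA B q HB Hq Hproper).
  - intros B B' q q' [HB _] Hq _ Hq' EB EK a.
    symmetry.
    apply (Z1_eq_of_Ker_sub _ _ _ _ HA B q HB Hq B' q' Hq');
      intros x; [apply EB | apply EK].
  - intros B X [[HB _] [HX [HBX HBXA]]].
    exists (factor_proj _ mul B X HBXA).
    split; [apply (factor_proj_Z1 _ _ _ inv) | apply (factor_proj_Ker _ _ _ inv)]; assumption.
Qed.
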